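(* Let $g_n\in\mathscr{A}_3(\Pi)$ ($n\ge1$) and $g\in\mathscr{A}_3(\Pi)$, with $(g_n)$ uniformly bounded. If $L(g_n/g)\to0$ and $V(g_n/g)\to0$, then $L(g_n)\to L(g)$ and $V(g_n)\to V(g)$.
   Context: $E$ is a locally compact complete separable metric space with $\sigma$-finite Borel measure $\mu$; $\Pi$ is a locally trace class orthogonal projection on $L^2(E,\mu)$ with kernel $\Pi(x,y)$. For Borel $f$, $L(f)=\int_E|f(x)-1|^3\Pi(x,x)d\mu(x)$ and $V(f)=\iint_{E^2}|f(x)-f(y)|^2|\Pi(x,y)|^2d\mu(x)d\mu(y)$. $\mathscr{A}_3(\Pi)$ is the set of positive Borel $g$ with $0<\inf g\le\sup g<\infty$, $L(g)<\infty$, $V(g)<\infty$, and for which some exhausting sequence of bounded sets $(E_n)$ satisfies $\lim_n\iint\chi_{E_n^c}(x)\chi_{E_n}(y)|g(x)-1|^2|\Pi(x,y)|^2d\mu(x)d\mu(y)=0$. *)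

From HB Require Import structures.
From mathcomp Require Import all_boot all_algebra.
From mathcomp Require Import all_classical all_reals all_analysis.
From mathcomp.real_closed Require Import complex.

Set Implicit Arguments.
Unset Strict Implicit.
Unset Printing Implicit Defensive.

Import GRing.Theory Num.Theory.
Local Open Scope classical_set_scope.
Local Open Scope ring_scope.

Notation Borel E := (g_sigma_algebraType (@open E)).

Section Defs.
Variable R : realType.

Definition bounded_set (E : completePseudoMetricType R) (A : set E) : Prop :=
  exists (x0 : E) (r : R), A `<=` ball x0 r.

(* E is a locally compact, complete, separable metric space
   (completeness is carried by the structure completePseudoMetricType). *)
Definition lcs_metric_space (E : completePseudoMetricType R) : Prop :=
  [/\ hausdorff_space E,
      locally_compact [set: E] &
      (exists D : set E, countable D /\ dense D)].

Definition exhausting_bounded (E : completePseudoMetricType R) (En : nat -> set E) : Prop :=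
  [/\ (forall n, @measurable _ (Borel E) (En n)),
      (forall n, bounded_set (En n)),
      (forall n, En n `<=` En n.+1) &
      \bigcup_n En n = [set: E]].

Definition sqnorm (z : R[i]) : R := complex.Re z ^+ 2 + complex.Im z ^+ 2.

Definition cintegral (E : completePseudoMetricType R)
    (mu : {measure set (Borel E) -> \bar R}) (f : E -> R[i]) : R[i] :=
  (Rintegral mu [set: Borel E] (fun z => complex.Re (f z)) +i*
   Rintegral mu [set: Borel E] (fun z => complex.Im (f z)))%C.

(* Pi : E -> E -> C is the (Hermitian, reproducing) kernel of a locally trace
   class orthogonal projection on L^2(E, mu):
   - Pi is jointly Borel measurable;
   - each row Pi(x, .) is in L^2(mu);
   - Pi(y, x) = conj Pi(x, y)      (self-adjointness);
   - \int Pi(x,z) Pi(z,y) dmu(z) = Pi(x,y)   (idempotence, Pi^2 = Pi);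
   - for every bounded Borel set B, \int_B Pi(x,x) dmu(x) < oo
     (local trace class; note that Pi(x,x) = \int |Pi(x,y)|^2 dmu(y) >= 0). *)
Definition loc_trace_proj_kernel (E : completePseudoMetricType R)
    (mu : {measure set (Borel E) -> \bar R}) (Pi : E -> E -> R[i]) : Prop :=
  [/\ (measurable_fun [set: Borel E * Borel E]
        (fun p : Borel E * Borel E => complex.Re (Pi p.1 p.2)) /\
       measurable_fun [set: Borel E * Borel E]
        (fun p : Borel E * Borel E => complex.Im (Pi p.1 p.2))),
      (forall x : E, (\int[mu]_y (sqnorm (Pi x y))%:E < +oo)%E),
      (forall x y : E, Pi y x = ((Pi x y)^*)%C),
      (forall x y : E, cintegral mu (fun z => Pi x z * Pi z y) = Pi x y) &
      (forall B : set E, @measurable _ (Borel E) B -> bounded_set B ->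
         (\int[mu]_(x in B) (complex.Re (Pi x x))%:E < +oo)%E)].

(* L(f) = \int |f(x) - 1|^3 Pi(x,x) dmu(x)   (Pi(x,x) is real) *)
Definition Lfunc (E : completePseudoMetricType R)
    (mu : {measure set (Borel E) -> \bar R}) (Pi : E -> E -> R[i]) (f : E -> R)
    : \bar R :=
  (\int[mu]_x (`|f x - 1| ^+ 3 * complex.Re (Pi x x))%:E)%E.

Definition Vfunc (E : completePseudoMetricType R)
    (mu : {measure set (Borel E) -> \bar R}) (Pi : E -> E -> R[i]) (f : E -> R)
    : \bar R :=
  (\int[mu]_x \int[mu]_y ((f x - f y) ^+ 2 * sqnorm (Pi x y))%:E)%E.

Definition A3class (E : completePseudoMetricType R)
    (mu : {measure set (Borel E) -> \bar R}) (Pi : E -> E -> R[i]) (g : E -> R)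
    : Prop :=
  [/\ measurable_fun [set: Borel E] g,
      (exists c : R, 0 < c /\ forall x, c <= g x) /\
      (exists C : R, forall x, g x <= C),
      (Lfunc mu Pi g < +oo)%E,
      (Vfunc mu Pi g < +oo)%E &
      (exists En : nat -> set E, exhausting_bounded En /\
        ((fun n => (\int[mu]_x \int[mu]_y
            ((\1_(~` En n) x * \1_(En n) y * (g x - 1) ^+ 2 * sqnorm (Pi x y))%:E))%E)
         @ \oo --> 0%E))].

End Defs.

From HB Require Import structures.
From mathcomp Require Import all_boot all_order all_algebra.
From mathcomp Require Import all_classical all_reals all_analysis.
From mathcomp.real_closed Require Import complex.
From mathcomp Require Import measurable_realfun ring lra.

Set Implicit Arguments.
Unset Strict Implicit.
Unset Printing Implicit Defensive.

Import Order.TTheory GRing.Theory Num.Theory numFieldNormedType.Exports.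
Local Open Scope classical_set_scope.
Local Open Scope ring_scope.

(* Put [h_n := g_n / g].  Then [g_n - g = g (h_n - 1)] and
   [(g_n x - g_n y) - (g x - g y) = g y (h_n x - h_n y) + (h_n x - 1) (g x - g y)],
   so, as [0 < g <= C], the integrands of [L(g_n)] and [V(g_n)] differ from
   those of [L(g)] and [V(g)] by terms controlled by the integrands of [L(h_n)]
   and [V(h_n)], except for the cross term [(h_n x - 1)^2 (g x - g y)^2].  That
   term is at most [eta^2 (g x - g y)^2 + C^2 / eta |h_n x - 1|^3], and since
   [\int |Pi(x,y)|^2 dmu(y) = Pi(x,x)] its double integral is at most
   [eta^2 V(g) + C^2 / eta L(h_n)].  With [(a + b)^p <= (1 + e) a^p + c_e b^p]
   for [p = 2, 3], this gives for every [e > 0] and [Phi = L, V]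
     [Phi(g_n) <= (1 + e) Phi(g) + M_e (L(h_n) + V(h_n))],
     [Phi(g) <= (1 + e) Phi(g_n) + e Phi(g) + M_e (L(h_n) + V(h_n))],
   and [Phi(g_n) -> Phi(g)] follows because [Phi(g)] is finite and
   [L(h_n) + V(h_n) -> 0]. *)

Section PerturbationInequalities.
Variable R : realFieldType.
Implicit Types a b e s t : R.

Lemma sqrD_le_eps a b e : 0 < e ->
  (a + b) ^+ 2 <= (1 + e) * a ^+ 2 + (1 + e^-1) * b ^+ 2.
Proof.
move=> e0.
have : 0 <= e^-1 * (e * a - b) ^+ 2 by rewrite mulr_ge0 ?sqr_ge0 // invr_ge0 ltW.
have -> : e^-1 * (e * a - b) ^+ 2 = e * a ^+ 2 - 2 * a * b + e^-1 * b ^+ 2.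
  by field; rewrite gt_eqF.
have -> : (a + b) ^+ 2 = a ^+ 2 + 2 * a * b + b ^+ 2 by ring.
lra.
Qed.

(* With [h := e / 7]: if [t <= h s] then [(1 + h)^3 <= 1 + 7 h];
   otherwise [s + t <= (2 / h) t]. *)
Lemma cubeD_le_eps s t e : 0 <= s -> 0 <= t -> 0 < e -> e <= 1 ->
  (s + t) ^+ 3 <= (1 + e) * s ^+ 3 + (14 / e) ^+ 3 * t ^+ 3.
Proof.
move=> s0 t0 e0 e1; set h := e / 7.
have h0 : 0 < h by rewrite divr_gt0.
have h1 : h <= 1 by rewrite ler_pdivrMr //; lra.
have -> : 14 / e = 2 / h by rewrite /h; field; rewrite gt_eqF.
have -> : 1 + e = 1 + 7 * h by rewrite /h; field.
have s3 : 0 <= s ^+ 3 by rewrite exprn_ge0.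
have [th|ht] := leP t (h * s).
- have : (s + t) ^+ 3 <= (1 + h) ^+ 3 * s ^+ 3.
    by rewrite -exprMn lerXn2r ?nnegrE //; nra.
  have : (1 + h) ^+ 3 <= 1 + 7 * h by rewrite !exprS expr0; nra.
  have : 0 <= (2 / h) ^+ 3 * t ^+ 3 by rewrite mulr_ge0 ?exprn_ge0 ?divr_ge0 // ltW.
  nra.
- have st : s + t <= 2 / h * t.
    have : s <= t / h by rewrite ler_pdivlMr // mulrC ltW.
    have : t <= t / h by rewrite ler_pdivlMr // ler_piMr.
    rewrite mulrAC -mulrA; lra.
  have : (s + t) ^+ 3 <= (2 / h) ^+ 3 * t ^+ 3.
    by rewrite -exprMn lerXn2r ?nnegrE //; nra.
  have : 0 <= (1 + 7 * h) * s ^+ 3 by rewrite mulr_ge0 //; lra.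
  lra.
Qed.

(* Split according to [|q| <= h]: small [q] costs [h^2 D^2], large [q] is
   controlled by [|q|^3 / h]. *)
Lemma sqrM_le_cube (q D c h : R) : 0 < h -> `|D| <= c ->
  q ^+ 2 * D ^+ 2 <= h ^+ 2 * D ^+ 2 + c ^+ 2 / h * `|q| ^+ 3.
Proof.
move=> h0 Dc.
have D2 : D ^+ 2 <= c ^+ 2.
  by rewrite -real_normK ?num_real // lerXn2r ?nnegrE // (le_trans _ Dc).
have D0 : 0 <= D ^+ 2 by rewrite sqr_ge0.
have q3 : 0 <= `|q| ^+ 3 by rewrite exprn_ge0.
have [qh|hq] := leP `|q| h.
- have : q ^+ 2 <= h ^+ 2 by rewrite -real_normK ?num_real // lerXn2r ?nnegrE // ltW.
  have : 0 <= c ^+ 2 / h * `|q| ^+ 3 by rewrite mulr_ge0 ?divr_ge0 ?sqr_ge0 // ltW.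
  nra.
- have qq : q ^+ 2 <= `|q| ^+ 3 / h.
    rewrite ler_pdivlMr // -real_normK ?num_real // !exprS expr0.
    have : 0 <= `|q| * `|q| by rewrite mulr_ge0.
    nra.
  have : 0 <= h ^+ 2 * D ^+ 2 by rewrite mulr_ge0 ?sqr_ge0.
  rewrite mulrAC -mulrA.
  nra.
Qed.

Lemma sqr_le_boundedD (u c d v C : R) : 0 <= c <= C -> `|u| = `|c * d + v| ->
  u ^+ 2 <= 2 * C ^+ 2 * d ^+ 2 + 2 * v ^+ 2.
Proof.
move=> /andP[c0 cC] uE.
rewrite -real_normK ?num_real // uE real_normK ?num_real //.
have : c ^+ 2 <= C ^+ 2 by rewrite lerXn2r ?nnegrE // (le_trans c0).
have : 0 <= (c * d - v) ^+ 2 by rewrite sqr_ge0.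
have : 0 <= d ^+ 2 by rewrite sqr_ge0.
have -> : (c * d + v) ^+ 2 = 2 * c ^+ 2 * d ^+ 2 + 2 * v ^+ 2 - (c * d - v) ^+ 2.
  by ring.
nra.
Qed.

End PerturbationInequalities.

Section EpsSandwich.
Variable R : realType.

Lemma cvgr_eps_sandwich (x e : R^nat) (y : R) : 0 <= y -> e @ \oo --> 0 ->
  (forall ep, 0 < ep -> ep <= 1 -> exists M, \forall n \near \oo,
     x n <= (1 + ep) * y + M * e n /\ y <= (1 + ep) * x n + ep * y + M * e n) ->
  x @ \oo --> y.
Proof.
move=> y0 e0 H; apply/cvgrPdist_le => eta eta0.
pose ep := Num.min 1 (eta / (8 * (y + 1))).
have ep0 : 0 < ep by rewrite lt_min ltr01 divr_gt0 //; lra.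
have ep1 : ep <= 1 by rewrite ge_min lexx.
have epy : ep * y <= eta / 8.
  have : ep * (8 * (y + 1)) <= eta.
    by rewrite -ler_pdivlMr ?ge_min ?lexx ?orbT //; lra.
  have : 0 <= ep * y by rewrite mulr_ge0 // ltW.
  lra.
have [M HM] := H ep ep0 ep1.
have Me : \forall n \near \oo, `|M * e n| <= eta / 4.
  have eta4 : 0 < eta / 4 by rewrite divr_gt0.
  have := cvgMl e0 (b := M) (FF := eventually_filter).
  rewrite mul0r => /cvgrPdist_le/(_ _ eta4); apply: filterS => n.
  by rewrite sub0r normrN mulrC.
(* With [m := M e_n]: [x_n - y <= ep y + |m|] and [y - x_n <= 3 ep y + 2 |m|]. *)
near=> n.
have [up lo] : x n <= (1 + ep) * y + M * e n /\
    y <= (1 + ep) * x n + ep * y + M * e n by near: n.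
have me : `|M * e n| <= eta / 4 by near: n.
set m := M * e n in up lo me.
have epx : ep * x n <= ep * ((1 + ep) * y + m) by rewrite ler_wpM2l // ltW.
have epepy : ep * (ep * y) <= ep * y by rewrite ler_piMl ?mulr_ge0 // ltW.
have epm : ep * m <= `|m|.
  by rewrite (le_trans (ler_wpM2l (ltW ep0) (ler_norm m))) // ler_piMl.
have mup := ler_norm m; have mlo := lerNnormlW (lexx `|m|).
rewrite ler_norml; apply/andP; split; lra.
Unshelve. all: by end_near.
Qed.

Lemma cvge_eps_sandwich (X e : (\bar R)^nat) (y : R) : 0 <= y ->
  (forall n, 0 <= X n)%E -> e @ \oo --> 0%E ->
  (forall ep, 0 < ep -> ep <= 1 -> exists M : R, forall n,
     (X n <= ((1 + ep) * y)%:E + M%:E * e n)%E /\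
     (y%:E <= (1 + ep)%:E * X n + (ep * y)%:E + M%:E * e n)%E) ->
  X @ \oo --> y%:E.
Proof.
move=> y0 X0 ce H.
have [efin fe] := (fine_cvgP e 0).1 ce.
have Xfin : \forall n \near \oo, X n \is a fin_num.
  have [M1 HM1] := H 1 ltr01 (lexx 1).
  near=> n; have ef : e n \is a fin_num by near: n.
  rewrite ge0_fin_numE //; apply: (le_lt_trans (HM1 n).1).
  by rewrite -(fineK ef) -EFinM -EFinD ltry.
apply/fine_cvgP; split => //.
apply: (@cvgr_eps_sandwich (fine \o X) (fine \o e) y y0 fe) => ep ep0 ep1.
have [M HM] := H ep ep0 ep1; exists M; near=> n.
have ef : e n \is a fin_num by near: n.
have xf : X n \is a fin_num by near: n.
have [] := HM n; rewrite -(fineK ef) -(fineK xf) -!EFinM -!EFinD !lee_fin.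
by split.
Unshelve. all: by end_near.
Qed.

End EpsSandwich.

Section IteratedIntegral.
Context d (T : measurableType d) (R : realType) (mu : {measure set T -> \bar R}).
Hypothesis mu_sigma_finite : sigma_finite [set: T] mu.
Implicit Types F G : T -> T -> R.

(* Tonelli's measurability theorem is stated for sigma-finite measure structures. *)
Let mu_sf : set T -> \bar R := mu.
HB.instance Definition _ := Measure.on mu_sf.
HB.instance Definition _ := @Measure_isSigmaFinite.Build _ _ _ mu_sf mu_sigma_finite.

Definition jointly_measurable F :=
  measurable_fun [set: T * T] (fun p : T * T => F p.1 p.2).

Definition iint F : \bar R := (\int[mu]_x \int[mu]_y (F x y)%:E)%E.

Lemma measurable_section F x : jointly_measurable F -> measurable_fun [set: T] (F x).
Proof. by move=> mF; exact: (measurable_fun_pair2 x mF). Qed.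

Lemma measurable_fun_inner_integral F : jointly_measurable F ->
  (forall x y, 0 <= F x y) ->
  measurable_fun [set: T] (fun x => \int[mu]_y (F x y)%:E)%E.
Proof.
move=> mF F0; have mF' : measurable_fun [set: T * T] (fun p : T * T => (F p.1 p.2)%:E).
  exact/measurable_EFinP.
have := measurable_fun_fubini_tonelli_F (m2 := mu_sf) _ mF' (fun p => F0 p.1 p.2).
exact.
Qed.

Lemma ge0_le_iint F G : jointly_measurable F -> jointly_measurable G ->
  (forall x y, 0 <= F x y) -> (forall x y, F x y <= G x y) -> (iint F <= iint G)%E.
Proof.
move=> mF mG F0 FG; have G0 x y : 0 <= G x y := le_trans (F0 x y) (FG x y).
apply: ge0_le_integral => //.
- by move=> x _; apply: integral_ge0 => y _; rewrite lee_fin.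
- exact: measurable_fun_inner_integral.
- exact: measurable_fun_inner_integral.
move=> x _; apply: ge0_le_integral => //.
- by move=> y _; rewrite lee_fin.
- by apply/measurable_EFinP; exact: measurable_section.
- by apply/measurable_EFinP; exact: measurable_section.
- by move=> y _; rewrite lee_fin.
Qed.

Lemma ge0_iintD F G : jointly_measurable F -> jointly_measurable G ->
  (forall x y, 0 <= F x y) -> (forall x y, 0 <= G x y) ->
  iint (fun x y => F x y + G x y) = (iint F + iint G)%E.
Proof.
move=> mF mG F0 G0; rewrite /iint -ge0_integralD //.
- apply: eq_integral => x _; rewrite -ge0_integralD //.
  + by move=> y _; rewrite lee_fin.
  + by apply/measurable_EFinP; exact: measurable_section.
  + by move=> y _; rewrite lee_fin.
  + by apply/measurable_EFinP; exact: measurable_section.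
- by move=> x _; apply: integral_ge0 => y _; rewrite lee_fin.
- exact: measurable_fun_inner_integral.
- by move=> x _; apply: integral_ge0 => y _; rewrite lee_fin.
- exact: measurable_fun_inner_integral.
Qed.

Lemma ge0_iintZl F a : 0 <= a -> jointly_measurable F -> (forall x y, 0 <= F x y) ->
  iint (fun x y => a * F x y) = (a%:E * iint F)%E.
Proof.
move=> a0 mF F0; rewrite /iint -ge0_integralZl ?lee_fin //.
- apply: eq_integral => x _; rewrite -ge0_integralZl ?lee_fin //.
  + by apply/measurable_EFinP; exact: measurable_section.
  + by move=> y _; rewrite lee_fin.
- exact: measurable_fun_inner_integral.
- by move=> x _; apply: integral_ge0 => y _; rewrite lee_fin.
Qed.

Lemma ge0_iint_le_comb (W F G1 G2 : T -> T -> R) c a b :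
  0 <= c -> 0 <= a -> 0 <= b ->
  jointly_measurable W -> jointly_measurable F ->
  jointly_measurable G1 -> jointly_measurable G2 ->
  (forall x y, 0 <= W x y) -> (forall x y, 0 <= F x y) ->
  (forall x y, 0 <= G1 x y) -> (forall x y, 0 <= G2 x y) ->
  (forall x y, c * F x y <= a * G1 x y + b * G2 x y) ->
  (c%:E * iint (fun x y => F x y * W x y)%R <=
   a%:E * iint (fun x y => G1 x y * W x y)%R +
   b%:E * iint (fun x y => G2 x y * W x y)%R)%E.
Proof.
move=> c0 a0 b0 mW mF mG1 mG2 W0 F0 G10 G20 FG.
have mMW H : jointly_measurable H -> jointly_measurable (fun x y => H x y * W x y).
  by move=> mH; exact: measurable_funM.
have mZ s H : jointly_measurable H -> jointly_measurable (fun x y => s * H x y).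
  by move=> mH; apply: measurable_funM => //; exact: measurable_cst.
have HW0 H : (forall x y, 0 <= H x y) -> forall x y, 0 <= H x y * W x y.
  by move=> H0 x y; rewrite mulr_ge0.
rewrite -!ge0_iintZl //; try by [exact: mMW | exact: HW0].
apply: (@le_trans _ _
  (iint (fun x y => a * (G1 x y * W x y) + b * (G2 x y * W x y)))).
  apply: ge0_le_iint => [||x y|x y].
  - exact: mZ (mMW _ mF).
  - by apply: measurable_funD; [exact: mZ (mMW _ mG1) | exact: mZ (mMW _ mG2)].
  - by rewrite mulr_ge0 ?HW0.
  - by rewrite !mulrA -mulrDl ler_wpM2r.
rewrite ge0_iintD //.
- exact: mZ (mMW _ mG1).
- exact: mZ (mMW _ mG2).
- by move=> x y; rewrite mulr_ge0 ?HW0.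
- by move=> x y; rewrite mulr_ge0 ?HW0.
Qed.

End IteratedIntegral.

Lemma sqnorm_ge0 (R : realType) (z : R[i]) : 0 <= sqnorm z.
Proof. by rewrite addr_ge0 ?sqr_ge0. Qed.

Lemma Re_mul_conjC (R : realType) (z : R[i]) : complex.Re (z * z^*)%C = sqnorm z.
Proof. by case: z => a b; rewrite /sqnorm /=; ring. Qed.

Section KernelFunctionals.
Context (R : realType) (E : completePseudoMetricType R)
  (mu : {measure set (Borel E) -> \bar R}) (Pi : E -> E -> R[i]).
Hypothesis Pi_kernel : loc_trace_proj_kernel mu Pi.
Implicit Types f g h : E -> R.

(* [Pi^2 = Pi] evaluated at [(x,x)], with [Pi(y,x) = conj Pi(x,y)]. *)
Lemma integral_sqnorm_kernel x :
  (\int[mu]_y (sqnorm (Pi x y))%:E)%E = (complex.Re (Pi x x))%:E.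
Proof.
case: Pi_kernel => _ Pi_L2 Pi_sym Pi_idem _.
rewrite -[in RHS](Pi_idem x x) /cintegral /=.
have -> : (fun y => complex.Re (Pi x y * Pi y x)) = (fun y => sqnorm (Pi x y)).
  by apply/funext => y; rewrite (Pi_sym x y) Re_mul_conjC.
rewrite /Rintegral fineK // ge0_fin_numE ?Pi_L2 //.
by apply: integral_ge0 => y _; rewrite lee_fin sqnorm_ge0.
Qed.

Lemma kernel_diag_ge0 x : 0 <= complex.Re (Pi x x).
Proof.
rewrite -lee_fin -integral_sqnorm_kernel integral_ge0 // => y _.
by rewrite lee_fin sqnorm_ge0.
Qed.

Lemma measurable_kernel_sqnorm :
  jointly_measurable (fun x y : Borel E => sqnorm (Pi x y)).
Proof.
case: Pi_kernel => -[mRe mIm] _ _ _ _.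
by apply: measurable_funD; exact: measurable_funX.
Qed.

Lemma measurable_kernel_diag :
  measurable_fun [set: Borel E] (fun x : Borel E => complex.Re (Pi x x)).
Proof.
case: Pi_kernel => -[mRe _] _ _ _ _.
have mdiag := measurable_fun_pair (@measurable_id _ (Borel E) setT)
  (@measurable_id _ (Borel E) setT).
exact: (measurableT_comp mRe mdiag).
Qed.

Lemma Lfunc_ge0 f : (0 <= Lfunc mu Pi f)%E.
Proof.
by apply: integral_ge0 => x _; rewrite lee_fin mulr_ge0 ?exprn_ge0 ?kernel_diag_ge0.
Qed.

Lemma Vfunc_ge0 f : (0 <= Vfunc mu Pi f)%E.
Proof.
apply: integral_ge0 => x _; apply: integral_ge0 => y _.
by rewrite lee_fin mulr_ge0 ?sqr_ge0 ?sqnorm_ge0.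
Qed.

Lemma measurable_Lintegrand f : measurable_fun [set: Borel E] f ->
  measurable_fun [set: Borel E]
    (fun x : Borel E => (`|f x - 1| ^+ 3 * complex.Re (Pi x x))%:E).
Proof.
move=> mf; apply/measurable_EFinP; apply: measurable_funM; last first.
  exact: measurable_kernel_diag.
apply: measurable_funX; apply: measurableT_comp => //.
by apply: measurable_funB => //; exact: measurable_cst.
Qed.

Lemma Lfunc_le f1 f2 h (C e : R) : measurable_fun [set: Borel E] f1 ->
  measurable_fun [set: Borel E] f2 -> measurable_fun [set: Borel E] h ->
  0 <= C -> 0 < e -> e <= 1 ->
  (forall x, `|f1 x - f2 x| <= C * `|h x - 1|) ->
  (Lfunc mu Pi f1 <= (1 + e)%:E * Lfunc mu Pi f2 +
     ((14 / e) ^+ 3 * C ^+ 3)%:E * Lfunc mu Pi h)%E.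
Proof.
move=> mf1 mf2 mh C0 e0 e1 f12.
have M0 : 0 <= (14 / e) ^+ 3 * C ^+ 3.
  by rewrite mulr_ge0 ?exprn_ge0 ?divr_ge0 // ltW.
have Lint0 f x : (0 <= (`|f x - 1| ^+ 3 * complex.Re (Pi x x))%:E)%E.
  by rewrite lee_fin mulr_ge0 ?exprn_ge0 ?kernel_diag_ge0.
rewrite /Lfunc -!ge0_integralZl ?lee_fin ?(@ltW _ _ 0 (1 + e)) ?addr_gt0 //;
  try exact: measurable_Lintegrand.
rewrite -ge0_integralD //; last 4 first.
- by move=> x _; apply: (mule_ge0 _ (Lint0 _ _)); rewrite lee_fin; lra.
- by apply: measurable_funeM; exact: measurable_Lintegrand.
- by move=> x _; apply: (mule_ge0 _ (Lint0 _ _)); rewrite lee_fin.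
- by apply: measurable_funeM; exact: measurable_Lintegrand.
apply: ge0_le_integral => //.
- exact: measurable_Lintegrand.
- by apply: emeasurable_funD; apply: measurable_funeM; exact: measurable_Lintegrand.
move=> x _; rewrite -!EFinM -EFinD lee_fin.
have tri : `|f1 x - 1| <= `|f2 x - 1| + C * `|h x - 1|.
  rewrite (le_trans _ (lerD (lexx _) (f12 x))) //.
  by rewrite [f1 x - 1](_ : _ = (f2 x - 1) + (f1 x - f2 x)) ?ler_normD //; ring.
have cube : `|f1 x - 1| ^+ 3 <=
    (1 + e) * `|f2 x - 1| ^+ 3 + (14 / e) ^+ 3 * C ^+ 3 * `|h x - 1| ^+ 3.
  rewrite -mulrA -exprMn (le_trans _ (cubeD_le_eps _ _ e0 e1)) ?mulr_ge0 //.
  by rewrite lerXn2r ?nnegrE ?addr_ge0 ?mulr_ge0.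
have := ler_wpM2r (kernel_diag_ge0 x) cube.
by rewrite mulrDl -!mulrA.
Qed.

Lemma Lfunc_iint h : measurable_fun [set: Borel E] h ->
  Lfunc mu Pi h = iint mu (fun x y => `|h x - 1| ^+ 3 * sqnorm (Pi x y)).
Proof.
move=> mh; apply: eq_integral => x _.
rewrite EFinM -integral_sqnorm_kernel -ge0_integralZl ?lee_fin //.
- by apply/measurable_EFinP; exact: measurable_section measurable_kernel_sqnorm.
- by move=> y _; rewrite lee_fin sqnorm_ge0.
Qed.

Lemma measurable_diff f : measurable_fun [set: Borel E] f ->
  jointly_measurable (fun x y : Borel E => f x - f y).
Proof.
move=> mf; apply: measurable_funB.
- exact: measurableT_comp mf measurable_fst.
- exact: measurableT_comp mf measurable_snd.
Qed.

Hypothesis mu_sigma_finite : sigma_finite [set: Borel E] mu.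

Section VfuncPerturbation.
Variables (f1 f2 g h : E -> R) (C : R).
Hypotheses (mf1 : measurable_fun [set: Borel E] f1)
  (mf2 : measurable_fun [set: Borel E] f2) (mg : measurable_fun [set: Borel E] g)
  (mh : measurable_fun [set: Borel E] h).
Hypothesis g_bound : forall x, 0 <= g x <= C.
Hypothesis gapE : forall x y, `|(f1 x - f1 y) - (f2 x - f2 y)| =
  `|g y * (h x - h y) + (h x - 1) * (g x - g y)|.

Let gap x y := (f1 x - f1 y) - (f2 x - f2 y).
Let cross x y := (h x - 1) * (g x - g y).

Let sqnorm_Pi_ge0 x y : 0 <= sqnorm (Pi x y). Proof. exact: sqnorm_ge0. Qed.
Let sqr_fun_ge0 (F : E -> E -> R) x y : 0 <= F x y ^+ 2. Proof. exact: sqr_ge0. Qed.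

Let measurable_sqr_diff f : measurable_fun [set: Borel E] f ->
  jointly_measurable (fun x y : Borel E => (f x - f y) ^+ 2).
Proof. by move=> mf; apply: measurable_funX; exact: measurable_diff. Qed.

Let measurable_gap : jointly_measurable (fun x y : Borel E => gap x y ^+ 2).
Proof. by apply: measurable_funX; apply: measurable_funB; exact: measurable_diff. Qed.

Let measurable_h1 : jointly_measurable (fun x _ : Borel E => h x - 1).
Proof.
apply: measurable_funB; last exact: measurable_cst.
exact: measurableT_comp mh measurable_fst.
Qed.

Let measurable_cross : jointly_measurable (fun x y : Borel E => cross x y ^+ 2).
Proof.
by apply: measurable_funX; apply: measurable_funM => //; exact: measurable_diff.
Qed.

Let measurable_h1_cube : jointly_measurable (fun x _ : Borel E => `|h x - 1| ^+ 3).
Proof. by apply: measurable_funX; exact: measurableT_comp measurable_h1. Qed.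

Lemma Vfunc_le_gap (e : R) : 0 < e ->
  (1%:E * Vfunc mu Pi f1 <= (1 + e)%:E * Vfunc mu Pi f2 +
    (1 + e^-1)%:E * iint mu (fun x y => gap x y ^+ 2 * sqnorm (Pi x y))%R)%E.
Proof.
move=> e0; have k0 : 0 <= 1 + e^-1 by rewrite addr_ge0 ?invr_ge0 ?ltW.
apply: (ge0_iint_le_comb mu_sigma_finite ler01 _ k0 measurable_kernel_sqnorm
  (measurable_sqr_diff mf1) (measurable_sqr_diff mf2) measurable_gap
  sqnorm_Pi_ge0 (sqr_fun_ge0 _) (sqr_fun_ge0 _) (sqr_fun_ge0 _)) => [|x y].
  by rewrite addr_ge0 ?ltW.
by rewrite mul1r -[X in X ^+ 2](subrK (f2 x - f2 y)) addrC sqrD_le_eps.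
Qed.

Lemma iint_gap_le (k : R) : 0 <= k ->
  (k%:E * iint mu (fun x y => gap x y ^+ 2 * sqnorm (Pi x y))%R <=
    (2 * k * C ^+ 2)%:E * Vfunc mu Pi h +
    (2 * k)%:E * iint mu (fun x y => cross x y ^+ 2 * sqnorm (Pi x y))%R)%E.
Proof.
move=> k0; have k2 : 0 <= 2 * k by rewrite mulr_ge0.
apply: (ge0_iint_le_comb mu_sigma_finite k0 _ k2 measurable_kernel_sqnorm
  measurable_gap (measurable_sqr_diff mh) measurable_cross
  sqnorm_Pi_ge0 (sqr_fun_ge0 _) (sqr_fun_ge0 _) (sqr_fun_ge0 _)) => [|x y].
  by rewrite mulr_ge0 ?sqr_ge0.
have := ler_wpM2l k0 (sqr_le_boundedD (g_bound y) (gapE x y)); rewrite /gap /cross.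
lra.
Qed.

(* Where [|h x - 1| <= eta] the cross term is [eta^2 (g x - g y)^2]-small;
   elsewhere it is dominated by the integrand of [L(h)]. *)
Lemma iint_cross_le (k eta : R) : 0 <= k -> 0 < eta ->
  (k%:E * iint mu (fun x y => cross x y ^+ 2 * sqnorm (Pi x y))%R <=
    (k * eta ^+ 2)%:E * Vfunc mu Pi g + (k * C ^+ 2 / eta)%:E * Lfunc mu Pi h)%E.
Proof.
move=> k0 eta0; rewrite (Lfunc_iint mh).
apply: (ge0_iint_le_comb mu_sigma_finite k0 _ _ measurable_kernel_sqnorm
  measurable_cross (measurable_sqr_diff mg) measurable_h1_cube sqnorm_Pi_ge0
  (sqr_fun_ge0 _) (sqr_fun_ge0 _)) => [||x y|x y].
- by rewrite mulr_ge0 ?sqr_ge0.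
- by apply: divr_ge0; [rewrite mulr_ge0 ?sqr_ge0 | exact: ltW].
- exact/exprn_ge0/normr_ge0.
have gD : `|g x - g y| <= C.
  move: (g_bound x) (g_bound y) => /andP[? ?] /andP[? ?].
  by rewrite ler_norml; apply/andP; lra.
have := ler_wpM2l k0 (sqrM_le_cube (h x - 1) eta0 gD); rewrite /cross; lra.
Qed.

Lemma Vfunc_le (e eta : R) : 0 < e -> 0 < eta ->
  (Vfunc mu Pi f1 <= (1 + e)%:E * Vfunc mu Pi f2 +
     (2 * (1 + e^-1) * eta ^+ 2)%:E * Vfunc mu Pi g +
     ((2 * (1 + e^-1) * C ^+ 2)%:E * Vfunc mu Pi h +
      (2 * (1 + e^-1) * C ^+ 2 / eta)%:E * Lfunc mu Pi h))%E.
Proof.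
move=> e0 eta0; have k0 : 0 <= 1 + e^-1 by rewrite addr_ge0 ?invr_ge0 ?ltW.
rewrite -[Vfunc mu Pi f1]mul1e -addeA.
apply: le_trans (Vfunc_le_gap e0) _; apply: leeD => //; rewrite addeCA.
apply: le_trans (iint_gap_le k0) _; apply: leeD => //.
exact: iint_cross_le (mulr_ge0 _ k0) eta0.
Qed.

End VfuncPerturbation.
End KernelFunctionals.

Lemma lee_combination (R : realType) (u v : \bar R) (a b M : R) :
  (0 <= u)%E -> (0 <= v)%E -> 0 <= a <= M -> 0 <= b <= M ->
  (a%:E * u + b%:E * v <= M%:E * (u + v))%E.
Proof.
move=> u0 v0 /andP[a0 aM] /andP[b0 bM].
rewrite ge0_muleDr //; apply: leeD; apply: lee_wpmul2r; rewrite ?lee_fin //.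
Qed.

Section RatioConvergence.
Context (R : realType) (E : completePseudoMetricType R)
  (mu : {measure set (Borel E) -> \bar R}) (Pi : E -> E -> R[i]).
Hypothesis Pi_kernel : loc_trace_proj_kernel mu Pi.
Hypothesis mu_sigma_finite : sigma_finite [set: Borel E] mu.
Variables (g_ : nat -> E -> R) (g : E -> R) (c C : R).
Hypothesis mg_ : forall n, measurable_fun [set: Borel E] (g_ n).
Hypothesis mg : measurable_fun [set: Borel E] g.
Hypothesis c_gt0 : 0 < c.
Hypothesis g_ge : forall x, c <= g x.
Hypothesis g_le : forall x, g x <= C.

Let h n x := g_ n x / g x.
Let err n := (Vfunc mu Pi (h n) + Lfunc mu Pi (h n))%E.
Hypothesis Lfunc_ratio_cvg0 : (fun n => Lfunc mu Pi (h n)) @ \oo --> 0%E.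
Hypothesis Vfunc_ratio_cvg0 : (fun n => Vfunc mu Pi (h n)) @ \oo --> 0%E.

Let g_gt0 x : 0 < g x. Proof. exact: lt_le_trans c_gt0 (g_ge x). Qed.
Let g_bound x : 0 <= g x <= C. Proof. by rewrite ltW ?g_le. Qed.
Let C_ge0 : 0 <= C. Proof. by rewrite (le_trans (ltW (g_gt0 point))) ?g_le. Qed.

(* [1 / g = 1 / max(g, c)], and [t |-> 1 / max(t, c)] is monotone. *)
Lemma measurable_ratio n : measurable_fun [set: Borel E] (h n).
Proof.
pose inv_c (t : R) := (Num.max t c)^-1.
have minv_c : measurable_fun [set: R] inv_c.
  apply: nonincreasing_measurable => // s t st.
  have cs : c <= Num.max s c by rewrite le_max lexx orbT.
  have ct : c <= Num.max t c by rewrite le_max lexx orbT.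
  rewrite /inv_c lef_pV2 ?posrE ?(lt_le_trans c_gt0) //.
  by rewrite ge_max !le_max st lexx !orbT.
have -> : h n = (fun x => g_ n x * inv_c (g x)).
  by apply/funext => x; rewrite /h /inv_c (max_idPl (g_ge x)).
by apply: measurable_funM => //; exact: measurableT_comp minv_c mg.
Qed.

Lemma ratio_dist n x : `|g_ n x - g x| <= C * `|h n x - 1|.
Proof.
have -> : g_ n x - g x = g x * (h n x - 1).
  by rewrite /h mulrBr mulr1 mulrCA divff ?mulr1 // gt_eqF.
by rewrite normrM ger0_norm ?(ltW (g_gt0 x)) // ler_wpM2r ?g_le.
Qed.

Lemma ratio_gap n x y : `|(g_ n x - g_ n y) - (g x - g y)| =
  `|g y * (h n x - h n y) + (h n x - 1) * (g x - g y)|.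
Proof.
congr `|_|; rewrite /h.
have gx := g_gt0 x; have gy := g_gt0 y.
by field; rewrite !gt_eqF.
Qed.

Lemma err_cvg0 : err @ \oo --> 0%E.
Proof. by rewrite -(adde0 0%E); exact: cvgeD. Qed.

Let Lh_err (M : R) n : 0 <= M -> (M%:E * Lfunc mu Pi (h n) <= M%:E * err n)%E.
Proof. by move=> M0; rewrite lee_wpmul2l ?lee_fin // leeDr ?Vfunc_ge0. Qed.

Let fin_value (v : \bar R) : (0 <= v)%E -> (v < +oo)%E -> v = (fine v)%:E.
Proof. by move=> v0 vfin; rewrite fineK // ge0_fin_numE. Qed.

Lemma Lfunc_ratio_cvg : (Lfunc mu Pi g < +oo)%E ->
  (fun n => Lfunc mu Pi (g_ n)) @ \oo --> Lfunc mu Pi g.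
Proof.
move=> /(fin_value (Lfunc_ge0 Pi_kernel g)) Lg; rewrite Lg.
apply: (cvge_eps_sandwich _ _ err_cvg0) => [|n|ep ep0 ep1].
- exact: fine_ge0 (Lfunc_ge0 Pi_kernel g).
- exact: Lfunc_ge0 Pi_kernel (g_ n).
have M0 : 0 <= (14 / ep) ^+ 3 * C ^+ 3 by rewrite mulr_ge0 ?exprn_ge0 ?divr_ge0 // ltW.
exists ((14 / ep) ^+ 3 * C ^+ 3) => n; split.
- rewrite EFinM -Lg.
  apply: le_trans (Lfunc_le Pi_kernel (mg_ n) mg (measurable_ratio n) C_ge0 ep0 ep1
    (ratio_dist n)) _.
  by apply: leeD => //; exact: Lh_err.
- have dist x : `|g x - g_ n x| <= C * `|h n x - 1| by rewrite distrC ratio_dist.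
  rewrite -Lg -addeA.
  apply: le_trans (Lfunc_le Pi_kernel mg (mg_ n) (measurable_ratio n) C_ge0 ep0 ep1
    dist) _.
  apply: leeD => //; apply: le_trans (Lh_err n M0) _.
  by rewrite leeDr // lee_fin mulr_ge0 ?fine_ge0 ?(Lfunc_ge0 Pi_kernel) // ltW.
Qed.

Lemma Vfunc_ratio_cvg : (Vfunc mu Pi g < +oo)%E ->
  (fun n => Vfunc mu Pi (g_ n)) @ \oo --> Vfunc mu Pi g.
Proof.
have V0 f : (0 <= Vfunc mu Pi f)%E := Vfunc_ge0 mu Pi f.
move=> /(fin_value (V0 g)); set y := fine (Vfunc mu Pi g) => Vg; rewrite Vg.
have y0 : 0 <= y by rewrite fine_ge0.
apply: (cvge_eps_sandwich y0 (fun n => V0 (g_ n)) err_cvg0) => ep ep0 ep1.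
pose e := ep / 2; pose eta := ep / 4.
have e0 : 0 < e by rewrite divr_gt0.
have eta0 : 0 < eta by rewrite divr_gt0.
have k0 : 0 <= 2 * (1 + e^-1) by rewrite mulr_ge0 // addr_ge0 // invr_ge0 ltW.
have keta : e + 2 * (1 + e^-1) * eta ^+ 2 <= ep.
  have -> : e + 2 * (1 + e^-1) * eta ^+ 2 = (ep ^+ 2 + 6 * ep) / 8.
    by rewrite /e /eta; field; rewrite gt_eqF.
  by rewrite ler_pdivrMr //; nra.
pose A := 2 * (1 + e^-1) * C ^+ 2; pose B := A / eta.
have A0 : 0 <= A by rewrite mulr_ge0 ?sqr_ge0.
have B0 : 0 <= B := divr_ge0 A0 (ltW eta0).
have err_bound n :
    (A%:E * Vfunc mu Pi (h n) + B%:E * Lfunc mu Pi (h n) <= (A + B)%:E * err n)%E.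
  apply: lee_combination; rewrite ?V0 ?(Lfunc_ge0 Pi_kernel) //.
  - by rewrite A0 lerDl.
  - by rewrite B0 lerDr.
exists (A + B) => n; split.
- apply: le_trans (Vfunc_le Pi_kernel mu_sigma_finite (mg_ n) mg mg
    (measurable_ratio n) g_bound (ratio_gap n) e0 eta0) _.
  rewrite Vg; apply: leeD; last exact: err_bound.
  by rewrite -!EFinM -EFinD lee_fin -mulrDl ler_wpM2r //; lra.
- have gap x z : `|(g x - g z) - (g_ n x - g_ n z)| =
      `|g z * (h n x - h n z) + (h n x - 1) * (g x - g z)|.
    by rewrite distrC ratio_gap.
  rewrite -Vg; apply: le_trans (Vfunc_le Pi_kernel mu_sigma_finite mg (mg_ n) mg
    (measurable_ratio n) g_bound gap e0 eta0) _.
  rewrite Vg; apply: leeD; last exact: err_bound.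
  have k_eta : 2 * (1 + e^-1) * eta ^+ 2 <= ep by lra.
  apply: leeD; first by rewrite lee_wpmul2r // lee_fin lerD2l /e; lra.
  by rewrite [(ep * y)%:E]EFinM lee_wpmul2r ?lee_fin.
Qed.

End RatioConvergence.

Theorem lemma7p7 (R : realType) (E : completePseudoMetricType R)
    (mu : {measure set (Borel E) -> \bar R}) (Pi : E -> E -> R[i])
    (g_ : nat -> E -> R) (g : E -> R) :
  lcs_metric_space E ->
  sigma_finite [set: Borel E] mu ->
  loc_trace_proj_kernel mu Pi ->
  (forall n, A3class mu Pi (g_ n)) ->
  A3class mu Pi g ->
  (exists C : R, forall n x, `|g_ n x| <= C) ->
  ((fun n => Lfunc mu Pi (fun x => g_ n x / g x)) @ \oo --> 0%E) ->
  ((fun n => Vfunc mu Pi (fun x => g_ n x / g x)) @ \oo --> 0%E) ->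
  ((fun n => Lfunc mu Pi (g_ n)) @ \oo --> Lfunc mu Pi g) /\
  ((fun n => Vfunc mu Pi (g_ n)) @ \oo --> Vfunc mu Pi g).
Proof.
move=> _ mu_sf Pi_kernel g_A3 [mg [[c [c_gt0 g_ge]] [C g_le]] Lg_fin Vg_fin _] _ hL hV.
have mg_ n : measurable_fun [set: Borel E] (g_ n) by case: (g_A3 n).
split.
- exact: (Lfunc_ratio_cvg Pi_kernel mg_ mg c_gt0 g_ge g_le hL hV Lg_fin).
- exact: (Vfunc_ratio_cvg Pi_kernel mu_sf mg_ mg c_gt0 g_ge g_le hL hV Vg_fin).
Qed.
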